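(* Let $L$ be a finite simplicial complex, $H\subseteq L$ a hypergraph, and $k\geq 1$, with $\mathrm{Ext}=\Delta\gamma\delta\gamma$ and $\mathrm{Int}=\delta\gamma\Delta\gamma$. (a) If $H\neq\emptyset$, then $\max(L)\cap\mathrm{Ext}^k(H)$ equals the set of all simplices occurring in some broad path $\tau_1\cdots\tau_k$ of length $k$ in $L$ for which there is $\sigma\in H$ with $\sigma\subseteq\tau_1$. (b) If $H\neq L$, then $\gamma\,\mathrm{Int}^k(H)$ equals the set of all simplices occurring in some path $\tau'_1\cdots\tau'_k$ of length $k$ in $L$ for which there is $\sigma'\in\gamma H$ with $\tau'_1\cap\sigma'\neq\emptyset$.
   Context: $L$ is a finite collection of nonempty sets closed under nonempty subsets; a hypergraph in $L$ is any subset of $L$. Operators on subsets $H\subseteq L$: $\Delta H=\{\sigma\in L:\exists\tau\in H,\sigma\subseteq\tau\}$, $\delta H=\{\sigma\in L:\text{every nonempty }\tau\subseteq\sigma\text{ lies in }H\}$, $\gamma H=L\setminus H$. $\max(L)$ is the set of maximal faces of $L$. A path is a sequence $\tau_1\cdots\tau_m$ of simplices of $L$ with $\tau_i\cap\tau_{i+1}\neq\emptyset$; its length is $m$. A broad path is a path consisting of maximal faces of $L$. *)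

From mathcomp Require Import all_boot.
Set Implicit Arguments. Unset Strict Implicit. Unset Printing Implicit Defensive.

Section Defs.
Variable V : finType.
Variable L : {set {set V}}.

Definition simplicial_complex : Prop :=
  set0 \notin L /\
  forall s t : {set V}, s \in L -> t \subset s -> t != set0 -> t \in L.

Definition Delta (H : {set {set V}}) : {set {set V}} :=
  [set s in L | [exists t in H, s \subset t]].

Definition delta (H : {set {set V}}) : {set {set V}} :=
  [set s in L | [forall t : {set V}, ((t != set0) && (t \subset s)) ==> (t \in H)]].

Definition gamma (H : {set {set V}}) : {set {set V}} := L :\: H.

Definition Ext (H : {set {set V}}) : {set {set V}} := Delta (gamma (delta (gamma H))).
Definition Int (H : {set {set V}}) : {set {set V}} := delta (gamma (Delta (gamma H))).

Definition maxL : {set {set V}} :=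
  [set s in L | [forall t in L, (s \subset t) ==> (t == s)]].

Definition meets (a b : {set V}) : bool := a :&: b != set0.

Definition is_path (t1 : {set V}) (q : seq {set V}) : bool :=
  all (fun t => t \in L) (t1 :: q) && path meets t1 q.

Definition is_broad_path (t1 : {set V}) (q : seq {set V}) : bool :=
  is_path t1 q && all (fun t => t \in maxL) (t1 :: q).

End Defs.

From mathcomp Require Import all_boot.
Set Implicit Arguments. Unset Strict Implicit. Unset Printing Implicit Defensive.

(* On a simplicial complex, gamma delta gamma X is the up-closure of X in L, so
   Ext X consists of the faces lying below a face above X, and a maximal face is
   in Ext X iff it contains a face of X.  Hence a maximal face lies in
   Ext (Ext X) iff it meets a maximal face of Ext X.  Dually, gamma (Int X) is
   the set of faces meeting a face of gamma X.  So in both parts the k-th set is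
   the k-th layer of a search along the relation "meets", started from the faces
   containing (resp. meeting) a face of H (resp. of gamma H); since every face
   meets itself, the layers grow, and the k-th layer consists exactly of the
   faces occurring on a path of length k from the starting set. *)

Section PathLayers.
Variables (T : finType) (A : {set T}) (P : pred T) (e : rel T).
Variable S : nat -> {set T}.
Hypothesis e_refl : {in A, forall x, e x x}.
Hypothesis layer0 : forall s, (s \in S 0) = (s \in A) && P s.
Hypothesis layerS : forall n s, (s \in S n.+1) = (s \in A) && [exists u in S n, e u s].

Lemma layer_sub n : S n \subset A.
Proof. by apply/subsetP => s; case: n => [|n]; rewrite ?layer0 ?layerS => /andP[]. Qed.

Lemma layer_mono : {homo S : m n / m <= n >-> m \subset n}.
Proof.
apply: homo_leq => [X|X Y Z|n]; [exact: subxx | exact: subset_trans |].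
apply/subsetP => s sSn; have sA := subsetP (layer_sub n) s sSn.
by rewrite layerS sA; apply/exists_inP; exists s; rewrite ?e_refl.
Qed.

Lemma last_in_layer t1 q : all (fun t => t \in A) (t1 :: q) -> path e t1 q ->
  P t1 -> last t1 q \in S (size q).
Proof.
elim/last_ind: q => [|q u IHq]; first by rewrite /= layer0 andbT => ->.
rewrite -rcons_cons all_rcons rcons_path size_rcons last_rcons layerS.
move=> /andP[uA qA] /andP[pq equ] Pt1; rewrite uA.
by apply/exists_inP; exists (last t1 q); rewrite ?IHq.
Qed.

Lemma layer_last n s : s \in S n -> exists t1 q,
  [/\ size q = n, all (fun t => t \in A) (t1 :: q), path e t1 q, P t1
    & last t1 q = s].
Proof.
elim: n s => [|n IHn] s.
  by rewrite layer0 => /andP[sA Ps]; exists s, [::]; rewrite /= sA.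
rewrite layerS => /andP[sA /exists_inP[u /IHn[t1 [q [<- qA pq Pt1 <-]]] eus]].
exists t1, (rcons q s); rewrite size_rcons last_rcons -rcons_cons all_rcons.
by rewrite rcons_path sA qA pq eus.
Qed.

Lemma layerP n s : s \in S n <-> exists t1 q,
  [/\ size (t1 :: q) = n.+1, all (fun t => t \in A) (t1 :: q) && path e t1 q,
      P t1 & s \in t1 :: q].
Proof.
split=> [/layer_last[t1 [q [<- qA pq Pt1 <-]]] | [t1 [q [[<-] /andP[qA pq] Pt1 sq]]]].
  by exists t1, q; rewrite qA pq mem_last.
case/splitPl: q / sq qA pq => p1 p2 <-; rewrite -cat_cons all_cat cat_path size_cat.
move=> /andP[p1A _] /andP[pp1 _]; apply: subsetP (last_in_layer p1A pp1 Pt1).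
by apply: layer_mono; rewrite leq_addr.
Qed.

End PathLayers.

Lemma meetsC (V : finType) : commutative (@meets V).
Proof. by move=> a b; rewrite /meets setIC. Qed.

Section Complex.
Variables (V : finType) (L : {set {set V}}).
Hypothesis L_complex : simplicial_complex L.
Implicit Types (s t a b m : {set V}) (X : {set {set V}}).

Lemma face_sub s t : s \in L -> t \subset s -> t != set0 -> t \in L.
Proof. by case: L_complex => _; apply. Qed.

Lemma face_neq0 s : s \in L -> s != set0.
Proof. by case: L_complex => L0 _ sL; apply: contraNneq L0 => <-. Qed.

Lemma meetsxx s : s \in L -> meets s s.
Proof. by rewrite /meets setIid; apply: face_neq0. Qed.

Lemma meets_common_face t a b : t \in L -> t \subset a -> t \subset b -> meets a b.
Proof.
move=> tL ta tb; apply: contra_neq (face_neq0 tL) => ab0.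
by apply/eqP; rewrite -subset0 -ab0 subsetI ta tb.
Qed.

Lemma meetsI_face a b : a \in L -> meets a b -> a :&: b \in L.
Proof. by move=> aL; apply: face_sub aL (subsetIl a b). Qed.

Lemma maxL_sub : maxL L \subset L.
Proof. by apply/subsetP => s; rewrite inE => /andP[]. Qed.

Lemma maxL_eq s t : s \in maxL L -> t \in L -> s \subset t -> t = s.
Proof.
rewrite inE => /andP[_ /forall_inP sM] tL st.
by apply/eqP; move/implyP: (sM t tL); apply.
Qed.

Lemma face_sub_maxL t : t \in L -> exists2 m, m \in maxL L & t \subset m.
Proof.
move=> tL; have [|m /andP[mL tm] m_max] := @arg_maxnP _ t
  (fun m : {set V} => (m \in L) && (t \subset m)) (fun m => #|m|).
  by rewrite tL subxx.
exists m => //; rewrite inE mL; apply/forall_inP => m' m'L; apply/implyP => mm'.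
by rewrite eq_sym eqEcard mm'; apply: m_max; rewrite m'L (subset_trans tm mm').
Qed.

Definition up_closure X : {set {set V}} :=
  [set t in L | [exists x in X, x \subset t]].

Definition meeting X : {set {set V}} :=
  [set t in L | [exists x in X, meets t x]].

Lemma gamma_delta_gamma X :
  X \subset L -> gamma L (delta L (gamma L X)) = up_closure X.
Proof.
move=> XL; apply/setP => t; rewrite !inE; case tL: (t \in L) => //=.
rewrite andbT negb_forall; apply/existsP/exists_inP => [[x] | [x xX xt]].
  rewrite negb_imply !inE negb_and negbK => /andP[/andP[x0 xt]].
  by rewrite (face_sub tL xt x0) orbF; exists x.
by exists x; rewrite negb_imply !inE xX xt (face_neq0 (subsetP XL x xX)).
Qed.

Lemma up_closure_Delta X : up_closure (Delta L X) = meeting X.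
Proof.
apply/setP => s; rewrite !inE; case sL: (s \in L) => //=.
apply/exists_inP/exists_inP => [[t] | [x xX sx]].
  rewrite inE => /andP[tL /exists_inP[x xX tx]] ts.
  by exists x => //; apply: meets_common_face tL ts tx.
exists (s :&: x); rewrite ?subsetIl // inE meetsI_face //.
by apply/exists_inP; exists x; rewrite ?subsetIr.
Qed.

Lemma Delta_sub X : Delta L X \subset L.
Proof. by apply/subsetP => s; rewrite inE => /andP[]. Qed.

Lemma gamma_Int X : gamma L (Int L X) = meeting (gamma L X).
Proof. by rewrite gamma_delta_gamma ?Delta_sub // up_closure_Delta. Qed.

Lemma ExtE X : X \subset L -> Ext L X = Delta L (up_closure X).
Proof. by move=> XL; rewrite /Ext gamma_delta_gamma. Qed.

Lemma iter_Ext_sub X n : X \subset L -> iter n (Ext L) X \subset L.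
Proof. by case: n => [|n] //= _; apply: Delta_sub. Qed.

Lemma maxL_Ext X s : X \subset L -> s \in maxL L ->
  (s \in Ext L X) = [exists x in X, x \subset s].
Proof.
move=> XL sM; have sL := subsetP maxL_sub s sM.
rewrite ExtE // inE sL; apply/exists_inP/idP => [[t] | sX].
  by rewrite inE => /andP[tL xt] st; rewrite -(maxL_eq sM tL st).
by exists s; rewrite ?inE ?sL.
Qed.

(* A face of Ext X below s extends to a maximal face above a face of X, and
   conversely u :&: s is a face of Ext X below s. *)
Lemma maxL_Ext_Ext X s : X \subset L -> s \in maxL L ->
  (s \in Ext L (Ext L X)) = [exists u in maxL L :&: Ext L X, meets u s].
Proof.
move=> XL sM; have uL u : u \in maxL L -> u \in L := subsetP maxL_sub u.
rewrite maxL_Ext //; last exact: Delta_sub.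
apply/exists_inP/exists_inP => [[x xE xs] | [u]].
  move: xE; rewrite [in x \in _]ExtE // inE => /andP[xL /exists_inP[t]].
  rewrite inE => /andP[tL /exists_inP[y yX yt]] xt.
  have [m mM tm] := face_sub_maxL tL.
  exists m; last exact: meets_common_face xL (subset_trans xt tm) xs.
  rewrite inE mM maxL_Ext //.
  by apply/exists_inP; exists y; rewrite ?(subset_trans yt tm).
rewrite inE => /andP[uM]; rewrite maxL_Ext // => uX us.
exists (u :&: s); rewrite ?subsetIr // ExtE // inE meetsI_face ?uL //.
by apply/exists_inP; exists u; rewrite ?subsetIl // inE uL.
Qed.

Lemma is_broad_pathE t1 q : is_broad_path L t1 q =
  all (fun t => t \in maxL L) (t1 :: q) && path (@meets V) t1 q.
Proof.
rewrite /is_broad_path /is_path andbC andbA; congr (_ && _).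
by rewrite andb_idr //; apply: sub_all => t /(subsetP maxL_sub).
Qed.

Variable H : {set {set V}}.

Lemma broad_path_layersP n s : H \subset L ->
  s \in maxL L :&: iter n.+1 (Ext L) H <->
  exists t1 q,
    [/\ size (t1 :: q) = n.+1, is_broad_path L t1 q,
        (exists2 sigma, sigma \in H & sigma \subset t1) & s \in t1 :: q].
Proof.
move=> HL; have layer0 u : (u \in maxL L :&: iter 1 (Ext L) H) =
    (u \in maxL L) && [exists x in H, x \subset u].
  by rewrite in_setI; case: (boolP (u \in maxL L)) => //= /maxL_Ext->.
have layerS i u : (u \in maxL L :&: iter i.+2 (Ext L) H) =
    (u \in maxL L) && [exists w in maxL L :&: iter i.+1 (Ext L) H, meets w u].
  rewrite in_setI; case: (boolP (u \in maxL L)) => //= uM.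
  by rewrite maxL_Ext_Ext ?iter_Ext_sub.
have maxL_refl : {in maxL L, forall t, meets t t}.
  by move=> t /(subsetP maxL_sub); apply: meetsxx.
apply: iff_trans
  (layerP (S := fun i => maxL L :&: iter i.+1 (Ext L) H) maxL_refl layer0 layerS n s) _.
by split=> -[t1 [q [sq pq Pt st]]]; exists t1, q;
  rewrite ?is_broad_pathE in pq *; split=> //; apply/exists_inP.
Qed.

Lemma path_layersP n s :
  s \in gamma L (iter n.+1 (Int L) H) <->
  exists t1 q,
    [/\ size (t1 :: q) = n.+1, is_path L t1 q,
        (exists2 sigma, sigma \in gamma L H & t1 :&: sigma != set0) & s \in t1 :: q].
Proof.
have layer0 u : (u \in gamma L (iter 1 (Int L) H)) =
    (u \in L) && [exists x in gamma L H, meets u x].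
  by rewrite gamma_Int inE.
have layerS i u : (u \in gamma L (iter i.+2 (Int L) H)) =
    (u \in L) && [exists w in gamma L (iter i.+1 (Int L) H), meets w u].
  rewrite [iter _ _ _]/= gamma_Int inE; congr (_ && _).
  by apply: eq_existsb => w; rewrite meetsC.
apply: iff_trans
  (layerP (S := fun i => gamma L (iter i.+1 (Int L) H)) meetsxx layer0 layerS n s) _.
by split=> -[t1 [q [sq pq Pt st]]]; exists t1, q; split=> //; apply/exists_inP.
Qed.

End Complex.

Theorem lemma3p3 (V : finType) (L H : {set {set V}}) (k : nat) :
  simplicial_complex L -> H \subset L -> 1 <= k ->
  (H != set0 ->
     forall s : {set V},
       s \in maxL L :&: iter k (Ext L) H <->
       exists (t1 : {set V}) (q : seq {set V}),
         [/\ size (t1 :: q) = k, is_broad_path L t1 q,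
             (exists2 sigma, sigma \in H & sigma \subset t1)
           & s \in t1 :: q]) /\
  (H != L ->
     forall s : {set V},
       s \in gamma L (iter k (Int L) H) <->
       exists (t1 : {set V}) (q : seq {set V}),
         [/\ size (t1 :: q) = k, is_path L t1 q,
             (exists2 sigma, sigma \in gamma L H & t1 :&: sigma != set0)
           & s \in t1 :: q]).
Proof.
move=> L_complex HL; case: k => // n _.
by split=> _ s; [exact: broad_path_layersP | exact: path_layersP].
Qed.
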